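(* Let $f\in\mathcal{F}\{y_0,\ldots,y_n\}$ be a nonzero differentially homogeneous differential polynomial of degree $m$, not lying in $\mathcal{F}$, and let $\mathscr{R}$ be any ranking of $y_0,\ldots,y_n$. Then both the initial and the separant of $f$ with respect to $\mathscr{R}$ are differentially homogeneous.
   Context: $\mathcal{F}$ is an ordinary differential field with derivation $\delta$; $\mathcal{F}\{y_0,\ldots,y_n\}$ is the differential polynomial ring in the differential indeterminates $y_0,\ldots,y_n$; $y_j^{(k)}$ denotes the $k$-th derivative. A differential polynomial $f$ is differentially homogeneous of degree $m$ if, for a new differential indeterminate $t$, $f(ty_0,\ldots,ty_n)=t^m f(y_0,\ldots,y_n)$ in $\mathcal{F}\{t,y_0,\ldots,y_n\}$. For a ranking $\mathscr{R}$ (a total order on all derivatives $y_j^{(k)}$ compatible with differentiation), the leader of $f\notin\mathcal{F}$ is the highest-ranked derivative $y_i^{(o)}$ occurring in $f$; writing $f=I_f\,(y_i^{(o)})^l+\cdots$ as a polynomial in the leader, $I_f$ is the initial and $\partial f/\partial y_i^{(o)}$ is the separant. *)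

From HB Require Import structures.
From mathcomp Require Import all_boot all_order all_algebra.
From mathcomp.multinomials Require Import mpoly.

Set Implicit Arguments.
Unset Strict Implicit.
Unset Printing Implicit Defensive.

Import GRing.Theory.
Local Open Scope ring_scope.

Definition is_derivation (F : fieldType) (delta : F -> F) : Prop :=
  (forall a b, delta (a + b) = delta a + delta b) /\
  (forall a b, delta (a * b) = delta a * b + a * delta b).

(* F{y_0,..,y_n} is the union over K of the polynomial rings in the          *)
(* derivatives y_j^(k), j <= n, k <= K.  We model the order-<=K part as      *)
(* {mpoly F[(n.+1) * (K.+1)]}, where the variable v stands for               *)
(*      y_(v %/ K.+1)^(v %% K.+1).                                           *)
Notation dpoly F n K := {mpoly F[(n.+1) * (K.+1)]}.

(* The ring F{t,y_0,..,y_n} (order <= K): variables                          *)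
(*   lshift _ i  (i : 'I_K.+1)                 stands for t^(i)              *)
(*   rshift _ v  (v : 'I_((n.+1)*(K.+1)))      stands for the same y as v.   *)
Notation tdpoly F n K := {mpoly F[K.+1 + (n.+1) * (K.+1)]}.

Definition vord (K N : nat) (v : 'I_N) : nat := (v %% K.+1)%N.
Definition vidx (K N : nat) (v : 'I_N) : nat := (v %/ K.+1)%N.

(* the variable v - i, i.e. y_j^(k-i) when v = y_j^(k) and i <= k *)
Definition ord_subn (N : nat) (v : 'I_N) (i : nat) : 'I_N :=
  Ordinal (leq_ltn_trans (leq_subr i v) (ltn_ord v)).

Section DHom.
Variables (F : fieldType) (n K : nat).

Definition tvar (i : 'I_K.+1) : tdpoly F n K := 'X_(lshift _ i).
Definition yvar (v : 'I_((n.+1) * (K.+1))) : tdpoly F n K := 'X_(rshift _ v).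

(* image of y_j^(k) under y_j |-> t*y_j :  (t y_j)^(k) = sum_i C(k,i) t^(i) y_j^(k-i) *)
Definition ty_image (v : 'I_((n.+1) * (K.+1))) : tdpoly F n K :=
  \sum_(i < K.+1 | (i <= vord K v)%N)
     ('C(vord K v, i))%:R * tvar i * yvar (ord_subn v i).

Definition embed_y (f : dpoly F n K) : tdpoly F n K :=
  mmap (@mpolyC _ F) yvar f.

Definition subst_ty (f : dpoly F n K) : tdpoly F n K :=
  mmap (@mpolyC _ F) ty_image f.

Definition is_dhomog (m : nat) (f : dpoly F n K) : Prop :=
  subst_ty f = tvar ord0 ^+ m * embed_y f.

Definition in_base (f : dpoly F n K) : Prop := f = (f@_0%MM)%:MP.

Definition occurs (v : 'I_((n.+1) * (K.+1))) (f : dpoly F n K) : Prop :=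
  exists2 m, m \in msupp f & (0 < m v)%N.

Definition degv (v : 'I_((n.+1) * (K.+1))) (f : dpoly F n K) : nat :=
  \max_(m <- msupp f) m v.

(* leading coefficient of f viewed as a polynomial in v (the initial if v is the leader) *)
Definition initial (v : 'I_((n.+1) * (K.+1))) (f : dpoly F n K) : dpoly F n K :=
  \sum_(m <- msupp f | m v == degv v f) f@_m *: 'X_[(m - U_(v) *+ degv v f)%MM].

(* partial derivative of f with respect to v (the separant if v is the leader) *)
Definition separant (v : 'I_((n.+1) * (K.+1))) (f : dpoly F n K) : dpoly F n K :=
  mderiv v f.

End DHom.

(* Rankings of y_0..y_n: a strict total order "r u w" (u ranked below w) on   *)
(* all derivatives (j, k) ~ y_j^(k), compatible with differentiation:        *)
(*   u < u'   and   u < w  ->  u' < w'.                                      *)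
Definition is_ranking (n : nat) (r : rel ('I_n.+1 * nat)) : Prop :=
  [/\ (forall u, ~~ r u u),
      (forall u w z, r u w -> r w z -> r u z),
      (forall u w, u != w -> r u w || r w u),
      (forall j k, r (j, k) (j, k.+1)) &
      (forall u w, r u w -> r (u.1, u.2.+1) (w.1, w.2.+1))].

Definition der_of (n K : nat) (v : 'I_((n.+1) * (K.+1))) : 'I_n.+1 * nat :=
  (inord (vidx K v), vord K v).

Definition is_leader (F : fieldType) (n K : nat) (r : rel ('I_n.+1 * nat))
    (f : dpoly F n K) (v : 'I_((n.+1) * (K.+1))) : Prop :=
  occurs v f /\
  (forall w, occurs w f -> w != v -> r (der_of w) (der_of v)).

Arguments tvar {F n K} i.
Arguments yvar {F n K} v.
Arguments ty_image {F n K} v.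
Arguments embed_y {F n K} f.
Arguments subst_ty {F n K} f.
Arguments is_dhomog {F n K} m f.
Arguments in_base {F n K} f.
Arguments occurs {F n K} v f.
Arguments degv {F n K} v f.
Arguments initial {F n K} v f.
Arguments separant {F n K} v f.
Arguments is_leader {F n K} r f v.

From HB Require Import structures.
From mathcomp Require Import all_boot all_order all_algebra.
From mathcomp.multinomials Require Import mpoly.

Set Implicit Arguments.
Unset Strict Implicit.
Unset Printing Implicit Defensive.

Import GRing.Theory.
Local Open Scope ring_scope.

(* View f as a univariate polynomial in its leader v = y_j^(k).  The
   substitution y -> t y sends v to t v + (terms in lower derivatives of y_j),
   and, v being the leader, it sends every other derivative occurring in f to
   an expression free of v.  Hence, as polynomials in v,
     f(t y) = (f with its coefficients substituted) o (t v + c),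
   and this equals t^m f(y).  Comparing the coefficients of v^D, D = deg_v f,
   gives t^D I(t y) = t^m I(y) for the initial I; differentiating in v and
   evaluating back at v gives t S(t y) = t^m S(y) for the separant S.
   Cancelling the powers of t yields homogeneity of I and S. *)

Lemma rmorph_mpoly_eq (R S : nzRingType) (N : nat)
    (G1 G2 : {rmorphism {mpoly R[N]} -> S}) (p : {mpoly R[N]}) :
  (forall c, G1 c%:MP = G2 c%:MP) ->
  (forall i, (exists2 m, m \in msupp p & (0 < m i)%N) -> G1 'X_i = G2 'X_i) ->
  G1 p = G2 p.
Proof.
move=> eqC eqX; rewrite (mpolyE p) !rmorph_sum big_seq [RHS]big_seq.
apply: eq_bigr => m mp; rewrite -mul_mpolyC !rmorphM eqC mpolyXE_id !rmorph_prod.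
congr (_ * _); apply: eq_bigr => i _; rewrite !rmorphXn.
have [->|im_gt0] := posnP (m i); first by rewrite !expr0.
by rewrite eqX //; exists m.
Qed.

Section MPolyIn.
Variables (R : comNzRingType) (N : nat) (x : 'I_N).
Implicit Types (p : {mpoly R[N]}).

Definition mpoly_in : {mpoly R[N]} -> {poly {mpoly R[N]}} :=
  mmap (polyC \o @mpolyC _ R) (fun i => if i == x then 'X else ('X_i)%:P).

HB.instance Definition _ := GRing.RMorphism.on mpoly_in.

Lemma mpoly_inC c : mpoly_in c%:MP = (c%:MP)%:P.
Proof. by rewrite /mpoly_in mmapC. Qed.

Lemma mpoly_inXU i : mpoly_in 'X_i = if i == x then 'X else ('X_i)%:P.
Proof. by rewrite /mpoly_in mmapX mmap1U. Qed.

Lemma horner_mpoly_in p : (mpoly_in p).['X_x] = p.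
Proof.
apply: (rmorph_mpoly_eq (G1 := horner_eval 'X_x \o mpoly_in) (G2 := idfun))
  => [c|i _] /=; rewrite /horner_eval; first by rewrite mpoly_inC hornerC.
by rewrite mpoly_inXU; case: eqP => [->|_]; rewrite ?hornerX ?hornerC.
Qed.

Lemma mpoly_inZ c p : mpoly_in (c *: p) = (c%:MP)%:P * mpoly_in p.
Proof. by rewrite /mpoly_in mmapZ. Qed.

Lemma mpoly_inX m : mpoly_in 'X_[m] = ('X_[(m - U_(x) *+ m x)%MM])%:P * 'X^(m x).
Proof.
rewrite /mpoly_in mmapX /mmap1 (bigD1 x) //= eqxx mulrC.
rewrite [in RHS]mpolyXE_id [in RHS](bigD1 x) //= mnmBE mulmnE mnm1E eqxx mul1n.
rewrite subnn expr0 mul1r rmorph_prod; congr (_ * _); apply: eq_bigr => i /negPf ix.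
by rewrite ix rmorphXn /= mnmBE mulmnE mnm1E eq_sym ix mul0n subn0.
Qed.

Lemma coef_mpoly_in p j :
  (mpoly_in p)`_j = \sum_(m <- msupp p | m x == j) p@_m *: 'X_[(m - U_(x) *+ j)%MM].
Proof.
rewrite {1}(mpolyE p) raddf_sum coef_sum [RHS]big_mkcond /=; apply: eq_bigr => m _.
rewrite mpoly_inZ mpoly_inX mulrA -rmorphM coefCM coefXn.
by rewrite mul_mpolyC eq_sym; case: eqP => [->|_]; rewrite ?mulr1 ?mulr0.
Qed.

Lemma mpoly_in_deriv p : mpoly_in (p^`M(x)) = (mpoly_in p)^`().
Proof.
elim/mpolyind: p => [|c m p _ _ IH]; first by rewrite mderiv0 !raddf0.
rewrite mderivD mderivZ !raddfD /= IH !mpoly_inZ deriv_mulC.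
congr (_ * _ + _); rewrite mderivX mpoly_inZ !mpoly_inX.
rewrite deriv_mulC derivXn mnmBE mnm1E eqxx mpolyC_nat rmorph_nat.
case: (m x) => [|k]; first by rewrite !mulr0n mul0r mulr0.
rewrite subn1 /=.
have -> : (m - U_(x) - U_(x) *+ k = m - U_(x) *+ k.+1)%MM.
  by apply/mnmP => i; rewrite !mnmBE !mulmnE mulnS subnDA.
by rewrite mulrCA mulr_natl mulrnAr.
Qed.
End MPolyIn.

Section CompLinear.
Variables (R : comNzRingType) (a c : R).

Lemma coef_exp_linear i :
  ((a%:P * 'X + c%:P) ^+ i)`_i = a ^+ i /\ (size ((a%:P * 'X + c%:P) ^+ i) <= i.+1)%N.
Proof.
elim: i => [|i [top size_le]]; first by rewrite expr0 coef1 size_poly1.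
set q := _ ^+ i in top size_le *.
have size_Mconst (b : R) : (size (q * b%:P)%R <= i.+1)%N.
  by rewrite mulrC mul_polyC (leq_trans (size_scale_leq _ _)).
rewrite exprSr mulrDr mulrA coefD coefMX /= !coefMC top (nth_default 0 size_le).
rewrite mul0r addr0 exprSr; split=> //.
rewrite (leq_trans (size_polyD _ _)) // geq_max (leq_trans (size_Mconst c)) // andbT.
by rewrite -/q (leq_trans (size_polyMleq _ _)) // size_polyX addn2 ltnS size_Mconst.
Qed.

Lemma coef_comp_linear (p : {poly R}) D :
  (size p <= D.+1)%N -> (p \Po (a%:P * 'X + c%:P))`_D = p`_D * a ^+ D.
Proof.
move=> size_p; rewrite coef_comp_poly.
rewrite (eq_bigr (fun i : 'I_(size p) => if (i : nat) == D then p`_D * a ^+ D else 0)).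
  rewrite -big_mkcond (big_ord1_eq _ (fun=> p`_D * a ^+ D)).
  by case: ltnP => // /(nth_default 0) ->; rewrite mul0r.
move=> i _; have [-> | ne_iD] := eqVneq (i : nat) D; first by rewrite (coef_exp_linear D).1.
have lt_iD : (i < D)%N by rewrite ltn_neqAle ne_iD -ltnS (leq_trans (ltn_ord i)).
by rewrite [X in _ * X]nth_default ?mulr0 // (leq_trans (coef_exp_linear i).2).
Qed.

End CompLinear.

Section DiffPoly.
Variables (F : fieldType) (n K : nat).
Local Notation N := (n.+1 * K.+1)%N.
Local Notation t := (tvar ord0 : tdpoly F n K).
Local Notation ty_map := (mmap (@mpolyC _ F) (@ty_image F n K)).
Local Notation y_map := (mmap (@mpolyC _ F) (@yvar F n K)).

Lemma tvar_neq0 i : tvar i != 0 :> tdpoly F n K.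
Proof.
apply/eqP => /(congr1 (mcoeff U_(lshift N i))).
by rewrite mcoeff0 mcoeffX eqxx => /eqP; rewrite oner_eq0.
Qed.

Definition subst_t0 : tdpoly F n K -> dpoly F n K :=
  mmap (@mpolyC _ F) (fun u => if split u is inr w then 'X_w else 0).

HB.instance Definition _ := GRing.RMorphism.on subst_t0.

Lemma subst_t0_tvar i : subst_t0 (tvar i) = 0.
Proof. by rewrite /subst_t0 /tvar mmapX mmap1U (unsplitK (inl i : 'I_K.+1 + 'I_N)). Qed.

Lemma subst_t0_embed_y g : subst_t0 (embed_y g) = g.
Proof.
apply: (rmorph_mpoly_eq (G1 := subst_t0 \o y_map) (G2 := idfun)) => [c|i _] /=.
  by rewrite mmapC /subst_t0 mmapC.
by rewrite mmapX mmap1U /subst_t0 /yvar mmapX mmap1U (unsplitK (inr i : 'I_K.+1 + 'I_N)).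
Qed.

(* When a > b, specializing t to 0 forces g = 0. *)
Lemma dhomog_of_tpow_eq (g : dpoly F n K) a b :
  subst_ty g * t ^+ a = t ^+ b * embed_y g -> exists c, is_dhomog c g.
Proof.
move=> eq_g; have t_neq0 := @tvar_neq0 ord0.
have [le_ab | lt_ba] := leqP a b.
  exists (b - a)%N; apply: (mulIf (expf_neq0 a t_neq0)).
  by rewrite eq_g mulrAC -exprD subnK.
exists 0%N; suff -> : g = 0 by rewrite /is_dhomog /subst_ty /embed_y !raddf0 mulr0.
have eq_g' : subst_ty g * t ^+ (a - b) = embed_y g.
  apply: (mulIf (expf_neq0 b t_neq0)).
  by rewrite -mulrA -exprD subnK ?(ltnW lt_ba) // eq_g mulrC.
have := congr1 subst_t0 eq_g'.
rewrite subst_t0_embed_y rmorphM rmorphXn /= subst_t0_tvar expr0n.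
by rewrite subn_eq0 leqNgt lt_ba mulr0.
Qed.

Lemma vord_ord_subn (M : nat) (w : 'I_M) i (le_i : (i <= vord K w)%N) :
  vidx K (ord_subn w i) = vidx K w /\ vord K w = (vord K (ord_subn w i) + i)%N.
Proof.
rewrite /vord /vidx /= in le_i *.
have lt_mod : (w %% K.+1 - i < K.+1)%N by rewrite (leq_ltn_trans (leq_subr _ _)) ?ltn_mod.
have -> : (w - i = w %/ K.+1 * K.+1 + (w %% K.+1 - i))%N by rewrite {1}(divn_eq w K.+1) addnBA.
rewrite divnMDl // modnMDl (divn_small lt_mod) (modn_small lt_mod) addn0 subnK //.
Qed.

Section Ranking.
Variables (r : rel ('I_n.+1 * nat)) (r_ranking : is_ranking r).

Lemma ranking_lt_addn j k i : (0 < i)%N -> r (j, k) (j, k + i)%N.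
Proof.
case: r_ranking => _ r_trans _ r_succ _; elim: i => // -[|i] IH _; first by rewrite addn1.
by apply: r_trans (IH isT) _; rewrite [(k + i.+2)%N]addnS.
Qed.

Lemma ord_subn_neq_leader (f : dpoly F n K) v w i :
  is_leader r f v -> occurs w f -> w != v -> (i <= vord K w)%N -> ord_subn w i != v.
Proof.
move=> [_ leader_max] occ_w w_neq_v le_i; apply/eqP => def_v.
have [eq_idx eq_ord] := vord_ord_subn le_i; rewrite def_v in eq_idx eq_ord.
have [i0 | i_gt0] := posnP i.
  by move/eqP: w_neq_v; apply; apply/val_inj; rewrite -def_v /= i0 subn0.
have v_lt_w : r (der_of v) (der_of w) by rewrite /der_of eq_idx eq_ord ranking_lt_addn.
case: r_ranking => r_irr r_trans _ _ _.
by move: (r_irr (der_of v)); rewrite (r_trans _ _ _ v_lt_w (leader_max w occ_w w_neq_v)).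
Qed.

End Ranking.

Section Leader.
Variable v : 'I_N.
Local Notation vt := (rshift K.+1 v).

Lemma mpoly_in_tvar i : mpoly_in vt (tvar i : tdpoly F n K) = (tvar i)%:P.
Proof. by rewrite /tvar mpoly_inXU eq_lrshift. Qed.

Lemma mpoly_in_yvar u : u != v -> mpoly_in vt (yvar u : tdpoly F n K) = (yvar u)%:P.
Proof. by move=> /negPf u_neq_v; rewrite /yvar mpoly_inXU (inj_eq (@rshift_inj _ _)) u_neq_v. Qed.

Lemma mpoly_in_yvar_leader : mpoly_in vt (yvar v : tdpoly F n K) = 'X.
Proof. by rewrite /yvar mpoly_inXU eqxx. Qed.

Lemma mpoly_in_ty_image_free w : (forall i, (i <= vord K w)%N -> ord_subn w i != v) ->
  mpoly_in vt (ty_image w : tdpoly F n K) = (ty_image w)%:P.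
Proof.
move=> not_v; rewrite /ty_image !rmorph_sum; apply: eq_bigr => i le_i.
by rewrite !rmorphM /= !rmorph_nat mpoly_in_tvar mpoly_in_yvar ?not_v.
Qed.

(* In the Leibniz expansion of (t y)^(k), only the i = 0 term t y^(k) involves y^(k). *)
Lemma mpoly_in_ty_image_leader :
  exists c, mpoly_in vt (ty_image v : tdpoly F n K) = t%:P * 'X + c%:P.
Proof.
rewrite /ty_image (bigD1 ord0) //=; set lower := \sum_(i | _) _.
exists lower; rewrite rmorphD; congr (_ + _).
  have -> : ord_subn v 0 = v by apply: val_inj; rewrite /= subn0.
  by rewrite bin0 mulr1n mul1r rmorphM /= mpoly_in_tvar mpoly_in_yvar_leader.
rewrite /lower !rmorph_sum; apply: eq_bigr => i /andP [le_i i_neq0].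
rewrite !rmorphM /= !rmorph_nat mpoly_in_tvar mpoly_in_yvar //.
apply: contra i_neq0 => /eqP/(congr1 val) /= eq_v; apply/eqP/val_inj => /=.
have le_iv : (i <= v)%N := leq_trans le_i (leq_mod _ _).
by apply/eqP; rewrite -(eqn_add2r (v - i)) subnKC // eq_v addnC addn0.
Qed.

Lemma mpoly_in_embed_y g : mpoly_in vt (embed_y g) = map_poly y_map (mpoly_in v g).
Proof.
apply: (rmorph_mpoly_eq (G1 := mpoly_in vt \o y_map) (G2 := map_poly y_map \o mpoly_in v))
  => [c|i _] /=; first by rewrite mmapC !mpoly_inC map_polyC /= mmapC.
rewrite mmapX mmap1U; have [-> | i_neq_v] := eqVneq i v.
  by rewrite mpoly_in_yvar_leader mpoly_inXU eqxx map_polyX.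
by rewrite mpoly_in_yvar // mpoly_inXU (negPf i_neq_v) map_polyC /= mmapX mmap1U.
Qed.

Lemma size_mpoly_in_degv (g : dpoly F n K) : (size (mpoly_in v g) <= (degv v g).+1)%N.
Proof.
apply/leq_sizeP => j lt_deg_j; rewrite coef_mpoly_in big1_seq // => mu /andP [/eqP mu_v mu_g].
have : (mu v <= degv v g)%N by exact: (leq_bigmax_seq (F := fun mu : 'X_{1..N} => mu v)).
by rewrite mu_v leqNgt lt_deg_j.
Qed.

Lemma coef_mpoly_in_degv (g : dpoly F n K) : (mpoly_in v g)`_(degv v g) = initial v g.
Proof. exact: coef_mpoly_in. Qed.

Section LeaderOf.
Variables (r : rel ('I_n.+1 * nat)) (f : dpoly F n K).
Hypotheses (r_ranking : is_ranking r) (v_leader : is_leader r f v).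

Lemma mpoly_in_subst_ty :
  mpoly_in vt (subst_ty f) = map_poly ty_map (mpoly_in v f) \Po mpoly_in vt (ty_image v).
Proof.
apply: (rmorph_mpoly_eq (G1 := mpoly_in vt \o ty_map)
  (G2 := comp_poly (mpoly_in vt (ty_image v)) \o map_poly ty_map \o mpoly_in v))
  => [c|i occ_i] /=; first by rewrite mmapC !mpoly_inC map_polyC /= mmapC comp_polyC.
rewrite mmapX mmap1U mpoly_inXU; have [-> | i_neq_v] := eqVneq i v.
  by rewrite map_polyX comp_polyX.
rewrite map_polyC /= mmapX mmap1U comp_polyC mpoly_in_ty_image_free // => j.
exact: (ord_subn_neq_leader r_ranking v_leader occ_i i_neq_v).
Qed.

Variable m : nat.
Hypothesis f_dhomog : is_dhomog m f.

Lemma comp_mpoly_in_dhomog :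
  map_poly ty_map (mpoly_in v f) \Po mpoly_in vt (ty_image v) =
  (t ^+ m)%:P * map_poly y_map (mpoly_in v f).
Proof.
rewrite -mpoly_in_subst_ty f_dhomog rmorphM rmorphXn /= mpoly_in_tvar.
by rewrite mpoly_in_embed_y rmorphXn.
Qed.

Lemma initial_dhomog : exists m1, is_dhomog m1 (initial v f).
Proof.
have [c ty_v] := mpoly_in_ty_image_leader; set D := degv v f.
have size_f : (size (map_poly ty_map (mpoly_in v f)) <= D.+1)%N.
  by rewrite (leq_trans (size_poly _ _)) ?size_mpoly_in_degv.
have := congr1 (fun p : {poly tdpoly F n K} => p`_D) comp_mpoly_in_dhomog.
rewrite /= ty_v coef_comp_linear // coefCM !coef_map /= coef_mpoly_in_degv.
exact: dhomog_of_tpow_eq.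
Qed.

Lemma separant_dhomog : exists m2, is_dhomog m2 (separant v f).
Proof.
have [c ty_v] := mpoly_in_ty_image_leader.
have := congr1 (fun p : {poly tdpoly F n K} => p^`().['X_vt]) comp_mpoly_in_dhomog.
rewrite /= deriv_comp {2}ty_v derivD derivC addr0 deriv_mulC derivX mulr1.
rewrite deriv_mulC !deriv_map -mpoly_in_deriv hornerM horner_comp horner_mpoly_in.
rewrite hornerC hornerCM.
have -> : ty_image v = ty_map 'X_v by rewrite mmapX mmap1U.
have -> : 'X_vt = y_map 'X_v by rewrite mmapX mmap1U.
rewrite !horner_map !horner_mpoly_in => eq_sep.
by apply: (dhomog_of_tpow_eq (a := 1)); rewrite expr1 eq_sep.
Qed.

End LeaderOf.
End Leader.
End DiffPoly.

(* The derivation never enters, since the derivatives y_j^(k) are independent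
   variables here; nor are the nondegeneracy hypotheses on f needed. *)
Theorem mainTheorem1 (F : fieldType) (delta : F -> F)
    (Hdelta : is_derivation delta) (n K m : nat)
    (f : dpoly F n K) (r : rel ('I_n.+1 * nat)) (v : 'I_((n.+1) * (K.+1))) :
  f != 0 -> ~ in_base f -> is_dhomog m f ->
  is_ranking r -> is_leader r f v ->
  (exists m1, is_dhomog m1 (initial v f)) /\ (exists m2, is_dhomog m2 (separant v f)).
Proof.

move=> _ _ f_dhomog r_ranking v_leader; split.
- exact: (initial_dhomog r_ranking v_leader f_dhomog).
- exact: (separant_dhomog r_ranking v_leader f_dhomog).
Qed.
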